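(* Let $(M,g,S)$, $p$, $u$ and $\varphi$ be as in the context, and let $\alpha_1$ be the subspace of $T_pM$ spanned by $u,Su,S^2u$. Then the vectors $$e_1=u,\qquad e_2=\frac{(-\cos\varphi)u+Su-(\cos\varphi)S^2u}{\sqrt{1-2\cos^2\varphi}},\qquad e_3=S^2u$$ form an orthonormal basis of $\alpha_1$ with respect to $g$.
   Context: $M$ is a 4-dimensional differentiable manifold with a positive definite metric $g$ and a tensor field $S$ of type $(1,1)$ whose components in some local coordinate system form the matrix with rows $(0,1,0,0)$, $(0,0,1,0)$, $(0,0,0,1)$, $(-1,0,0,0)$; hence $S^4=-\mathrm{id}$, and $g(Su,Sv)=g(u,v)$ for all vector fields $u,v$. Here $p\in M$ and $u\in T_pM$ is a unit vector (w.r.t. $g$) inducing an $S$-basis, i.e. $\{u,Su,S^2u,S^3u\}$ is a basis of $T_pM$, and $\varphi=\angle(u,Su)$ is the $g$-angle, so $\cos\varphi=g(u,Su)$. It is known that then $\angle(u,Su)=\angle(Su,S^2u)=\angle(S^2u,S^3u)=\pi-\angle(S^3u,u)$, $\angle(u,S^2u)=\angle(Su,S^3u)=\frac{\pi}{2}$, and $\frac{\pi}{4}<\varphi<\frac{3\pi}{4}$. *)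

From HB Require Import structures.
From mathcomp Require Import all_boot all_order all_algebra.
From mathcomp Require Import reals.
Set Implicit Arguments. Unset Strict Implicit. Unset Printing Implicit Defensive.
Import Order.TTheory GRing.Theory Num.Theory.
Local Open Scope ring_scope.

(* T_pM is identified with R^4 (column vectors) via the given local chart.
   S acts by the matrix whose rows are (0,1,0,0),(0,0,1,0),(0,0,0,1),(-1,0,0,0):
   (S v)_i = sum_j Smx i j * v_j. *)
Definition Smx (R : realType) : 'M[R]_4 :=
  \matrix_(i < 4, j < 4)
    (if (i : nat) == 3%N then (if (j : nat) == 0%N then -1 else 0)
     else if (j : nat) == i.+1 then 1 else 0).

Definition Sop (R : realType) (v : 'cV[R]_4) : 'cV[R]_4 := Smx R *m v.

(* the metric at p, given by its Gram matrix G in the chart *)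
Definition gform (R : realType) (G : 'M[R]_4) (v w : 'cV[R]_4) : R :=
  (v^T *m G *m w) 0 0.

Definition pos_def_metric (R : realType) (G : 'M[R]_4) : Prop :=
  G^T = G /\ forall v : 'cV[R]_4, v != 0 -> 0 < gform G v v.

Definition Sframe (R : realType) (u : 'cV[R]_4) : 'M[R]_4 :=
  \matrix_(i < 4) (iter i (@Sop R) u)^T.

Definition induces_Sbasis (R : realType) (u : 'cV[R]_4) : bool :=
  row_free (Sframe u).

(* matrix whose rows are u^T, (Su)^T, (S^2u)^T : row space = alpha_1 *)
Definition alpha1mx (R : realType) (u : 'cV[R]_4) : 'M[R]_(3, 4) :=
  \matrix_(i < 3) (iter i (@Sop R) u)^T.

Definition cosphi (R : realType) (G : 'M[R]_4) (u : 'cV[R]_4) : R :=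
  gform G u (Sop u).

Definition evec (R : realType) (G : 'M[R]_4) (u : 'cV[R]_4) (i : 'I_3) : 'cV[R]_4 :=
  let c := cosphi G u in
  match (i : nat) with
  | 0%N => u
  | 1%N => (Num.sqrt (1 - 2 * c ^+ 2))^-1 *:
             ((- c) *: u + Sop u - c *: Sop (Sop u))
  | _ => Sop (Sop u)
  end.

Definition emx (R : realType) (G : 'M[R]_4) (u : 'cV[R]_4) : 'M[R]_(3, 4) :=
  \matrix_(i < 3) (evec G u i)^T.

(* Since S is a g-isometry with S^4 = -1, g(u, S^2 u) = g(S^2 u, S^4 u) = -g(u, S^2 u),
   so u is orthogonal to S^2 u, while g(u, Su) = g(Su, S^2 u) = cos phi.  Hence
   w = -cos phi u + Su - cos phi S^2 u is orthogonal to u and S^2 u and has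
   g(w, w) = 1 - 2 cos^2 phi, which is positive because w <> 0 when u induces an
   S-basis.  The orthonormal vectors u, w / |w|, S^2 u are linearly independent
   (their Gram matrix is the identity), so they span the 3-space alpha_1. *)

From HB Require Import structures.
From mathcomp Require Import all_boot all_order all_algebra.
From mathcomp Require Import reals ring lra.
Set Implicit Arguments.
Unset Strict Implicit.
Unset Printing Implicit Defensive.
Import Order.TTheory GRing.Theory Num.Theory.
Local Open Scope ring_scope.

Section BilinearForm.
Variables (R : realType) (G : 'M[R]_4).

Lemma gformDl (a b c : 'cV[R]_4) : gform G (a + b) c = gform G a c + gform G b c.
Proof. by rewrite /gform linearD /= !mulmxDl mxE. Qed.

Lemma gformDr (a b c : 'cV[R]_4) : gform G c (a + b) = gform G c a + gform G c b.
Proof. by rewrite /gform !mulmxDr mxE. Qed.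

Lemma gformZl k (a c : 'cV[R]_4) : gform G (k *: a) c = k * gform G a c.
Proof. by rewrite /gform linearZ /= -!scalemxAl mxE. Qed.

Lemma gformZr k (a c : 'cV[R]_4) : gform G c (k *: a) = k * gform G c a.
Proof. by rewrite /gform -!scalemxAr mxE. Qed.

Lemma gformNl (a c : 'cV[R]_4) : gform G (- a) c = - gform G a c.
Proof. by rewrite -scaleN1r gformZl mulN1r. Qed.

Lemma gformNr (a c : 'cV[R]_4) : gform G c (- a) = - gform G c a.
Proof. by rewrite -scaleN1r gformZr mulN1r. Qed.

Definition gformE := (gformDl, gformDr, gformZl, gformZr, gformNl, gformNr).

Lemma gformC (a c : 'cV[R]_4) : G^T = G -> gform G a c = gform G c a.
Proof.
move=> GT; rewrite /gform -{1}GT.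
have -> : a^T *m G^T *m c = (c^T *m G *m a)^T by rewrite !trmx_mul trmxK mulmxA.
by rewrite mxE.
Qed.

Lemma row_free_gram m (E : 'M[R]_(m, 4)) :
  (forall i j, gform G (row i E)^T (row j E)^T = (i == j)%:R) -> row_free E.
Proof.
move=> gramE; apply/row_freeP; exists (G *m E^T); apply/matrixP => i j.
by rewrite [RHS]mxE -gramE /gform trmxK tr_row colE !mulmxA -!row_mul -colE !mxE.
Qed.

Lemma gform_normalize (v : 'cV[R]_4) (k := (Num.sqrt (gform G v v))^-1) :
  0 < gform G v v -> gform G (k *: v) (k *: v) = 1.
Proof.
move=> gvv_gt0; rewrite gformZl gformZr mulrA -invfM -expr2 sqr_sqrtr ?ltW //.
by rewrite mulVf ?gt_eqF.
Qed.

End BilinearForm.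

Lemma row_free_sub_eqmx (F : fieldType) m n (A B : 'M[F]_(m, n)) :
  row_free A -> (A <= B)%MS -> (A == B)%MS.
Proof.
move=> freeA sAB; rewrite -(mxrank_leqif_eq sAB).2 eqn_leq mxrankS //=.
by rewrite (eqnP freeA) rank_leq_row.
Qed.

Section ShiftOperator.
Variable R : realType.

Lemma SopE (v : 'cV[R]_4) (i : 'I_4) :
  Sop v i 0 = if (i : nat) == 3%N then - v 0 0 else v (inord i.+1) 0.
Proof.
rewrite /Sop !mxE !big_ord_recr big_ord0 /= !mxE /=.
case: i => [[|[|[|[|i]]]] ?] //=; rewrite ?mul0r ?mul1r ?add0r ?addr0 ?mulN1r //.
all: first [congr (v _ _) | congr (- v _ _)]; by apply: val_inj; rewrite /= ?inordK.
Qed.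

Lemma Sop4N (v : 'cV[R]_4) : Sop (Sop (Sop (Sop v))) = - v.
Proof.
apply/matrixP => i j; rewrite ord1 SopE [RHS]mxE.
case: i => [[|[|[|[|i]]]] ?] //=; rewrite ?inordK //=;
  do ![rewrite SopE /= ?inordK //=].
all: by congr (- v _ _); apply: val_inj; rewrite /= ?inordK.
Qed.

Lemma Sbasis_comb_eq0 (u : 'cV[R]_4) (a b c : R) :
  induces_Sbasis u -> a *: u + b *: Sop u + c *: Sop (Sop u) = 0 ->
  [/\ a = 0, b = 0 & c = 0].
Proof.
move=> free_u comb0; pose x : 'rV[R]_4 := \row_(i < 4) [:: a; b; c; 0]`_i.
have : x *m Sframe u == 0.
  rewrite mulmx_sum_row !big_ord_recr big_ord0 /= /Sframe !rowK !mxE /=.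
  move/(congr1 trmx): comb0; rewrite !linearD !linearZ /= trmx0 => combT0.
  by rewrite scale0r addr0 ?add0r combT0.
rewrite mulmx_free_eq0 // => /eqP/matrixP x0.
by split; [move: (x0 0 0) | move: (x0 0 1) | move: (x0 0 2%:R)]; rewrite !mxE.
Qed.

End ShiftOperator.

Section AdaptedFrame.
Variables (R : realType) (G : 'M[R]_4) (u : 'cV[R]_4).
Hypotheses (GT : G^T = G)
  (isoS : forall v w : 'cV[R]_4, gform G (Sop v) (Sop w) = gform G v w)
  (unit_u : gform G u u = 1).

Let c := cosphi G u.
Let w := (- c) *: u + Sop u - c *: Sop (Sop u).

Lemma gform_u_S2u : gform G u (Sop (Sop u)) = 0.
Proof.
have h : gform G (Sop (Sop u)) (Sop (Sop (Sop (Sop u)))) = gform G u (Sop (Sop u)).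
  by rewrite !isoS.
by move: h; rewrite Sop4N gformNr (gformC _ _ GT); lra.
Qed.

Let gform_Sframe3 :=
  (isoS, unit_u, gformC (Sop u) u GT, gformC (Sop (Sop u)) u GT, gform_u_S2u).

Lemma gform_w_u : gform G w u = 0.
Proof. by rewrite /w !gformE !gform_Sframe3 /c /cosphi; ring. Qed.

Lemma gform_w_S2u : gform G w (Sop (Sop u)) = 0.
Proof. by rewrite /w !gformE !gform_Sframe3 /c /cosphi; ring. Qed.

Lemma gform_w_w : gform G w w = 1 - 2 * c ^+ 2.
Proof. by rewrite /w !gformE !gform_Sframe3 /c /cosphi; ring. Qed.

Lemma cosphi_sqr_lt_half :
  (forall v, v != 0 -> 0 < gform G v v) -> induces_Sbasis u -> 2 * c ^+ 2 < 1.
Proof.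
move=> G_pos free_u; rewrite -subr_gt0 -gform_w_w; apply: G_pos; apply/eqP => w0.
have comb0 : (- c) *: u + 1 *: Sop u + (- c) *: Sop (Sop u) = 0.
  by rewrite scale1r -w0 /w !scaleNr.
by have [_ /eqP] := Sbasis_comb_eq0 free_u comb0; rewrite oner_eq0.
Qed.

Lemma evec_orthonormal : 2 * c ^+ 2 < 1 ->
  forall i j : 'I_3, gform G (evec G u i) (evec G u j) = (i == j)%:R.
Proof.
rewrite -subr_gt0 -gform_w_w => gww_gt0.
case=> [[|[|[|//]]] ?] [[|[|[|//]]] ?].
all: rewrite /evec /= -/c -/w -?gform_w_w ?gform_normalize //.
all: rewrite ?gformZl ?gformZr ?(gformC u w GT) ?(gformC (Sop (Sop u)) _ GT).
all: by rewrite ?isoS ?unit_u ?gform_w_u ?gform_w_S2u ?gform_u_S2u ?mulr0.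
Qed.

End AdaptedFrame.

Lemma emx_sub_alpha1mx (R : realType) (G : 'M[R]_4) (u : 'cV[R]_4) :
  (emx G u <= alpha1mx u)%MS.
Proof.
have iterS_sub (i : 'I_3) : ((iter i (@Sop R) u)^T <= alpha1mx u)%MS.
  by have := row_sub i (alpha1mx u); rewrite rowK.
apply/row_subP => -[[|[|[|//]]] ?]; rewrite rowK /evec /=.
- exact: (iterS_sub 0).
- rewrite !linearZ !linearD /= !linearN !linearZ /= scalerN -scaleNr.
  apply/scalemx_sub/addmx_sub; first apply: addmx_sub.
  + exact/scalemx_sub/(iterS_sub 0).
  + exact: (iterS_sub 1).
  + exact/scalemx_sub/(iterS_sub ord_max).
- exact: (iterS_sub ord_max).
Qed.

Theorem lemma4p1 (R : realType) (G : 'M[R]_4) (u : 'cV[R]_4)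
  (hG : pos_def_metric G)
  (hS : forall v w : 'cV[R]_4, gform G (Sop v) (Sop w) = gform G v w)
  (hu : gform G u u = 1)
  (hbasis : induces_Sbasis u) :
  (forall i j : 'I_3, gform G (evec G u i) (evec G u j) = (i == j)%:R) /\
  (emx G u == alpha1mx u)%MS.
Proof.
have [GT G_pos] := hG.
have orthonormal := evec_orthonormal GT hS hu (cosphi_sqr_lt_half GT hS hu G_pos hbasis).
split; first exact: orthonormal.
apply: row_free_sub_eqmx (emx_sub_alpha1mx G u).
by apply: (row_free_gram (G := G)) => i j; rewrite !rowK !trmxK; apply: orthonormal.
Qed.
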